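(* Let $t\in[n]$. If $S\subseteq N$ is $t$-switchable, then $P^{\langle t\rangle}_S$ contains $\mathcal{I}^{\langle t\rangle}$.
   Context: Fix positive integers $n, r_1,\dots,r_n$, let $N=[r_1]\times\cdots\times[r_n]$, and let $R$ be the polynomial ring over a field in the variables $x_a$, $a\in N$. For $a,b\in N$ and $i\in[n]$, ${\rm s}(i,a,b)\in N$ has $i$-th component $b_i$ and other components equal to those of $a$. Let $d(a,b)=\#\{j: a_j\neq b_j\}$ and $f_{i,a,b}=x_ax_b-x_{{\rm s}(i,a,b)}x_{{\rm s}(i,b,a)}$. Let $\mathcal{I}^{\langle t\rangle}=(f_{i,a,b}: a,b\in N,\ d(a,b)=2,\ i\in[t])$. A subset $S\subseteq N$ is $t$-switchable if for all $a,b\in S$ with $d(a,b)=2$ and all $i\in[t]$, ${\rm s}(i,a,b)\in S$. Elements $a,b\in S$ are connected in $S$ if there are $a_0=a,\dots,a_k=b$ in $S$ with $d(a_{j-1},a_j)\le 1$ for all $j$. For $t$-switchable $S$: $\tilde{\mathcal{I}}^{\langle t\rangle}_S=(f_{i,a,b}: i\in[t],\ a,b \text{ connected in } S)$, $\mathrm{Var}^{\langle t\rangle}_S=(x_a: a\notin S)$, $P^{\langle t\rangle}_S=\mathrm{Var}^{\langle t\rangle}_S+\tilde{\mathcal{I}}^{\langle t\rangle}_S$. *)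

From HB Require Import structures.
From mathcomp Require Import all_boot all_order all_algebra.
From mathcomp Require Import mpoly.
Set Implicit Arguments. Unset Strict Implicit. Unset Printing Implicit Defensive.
Import GRing.Theory.
Local Open Scope ring_scope.

(* The index set N = [r_1] x ... x [r_n], components 0-based. *)
Definition idxN (n : nat) (r : 'I_n -> nat) : finType :=
  {dffun forall i : 'I_n, 'I_(r i)}.

Section Defs.
Variables (n : nat) (r : 'I_n -> nat) (K : fieldType).
Local Notation N := (idxN r).

Definition polyR := {mpoly K[#|N|]}.
Definition xv (a : N) : polyR := 'X_(enum_rank a).

Definition sw (i : 'I_n) (a b : N) : N :=
  [ffun j => if j == i then b j else a j].

Definition dist (a b : N) : nat := #|[set j | a j != b j]|.

Definition fgen (i : 'I_n) (a b : N) : polyR :=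
  xv a * xv b - xv (sw i a b) * xv (sw i b a).

Definition ideal_gen (G : polyR -> Prop) (p : polyR) : Prop :=
  exists s : seq (polyR * polyR),
    (forall q, q \in s -> G q.2) /\ p = \sum_(q <- s) q.1 * q.2.

Definition ideal_add (I J : polyR -> Prop) (p : polyR) : Prop :=
  exists p1 p2, I p1 /\ J p2 /\ p = p1 + p2.

(* i \in [t] corresponds to (i : 'I_n) < t with 0-based indices *)
Definition I_t (t : nat) : polyR -> Prop :=
  ideal_gen (fun f => exists (a b : N) (i : 'I_n),
     dist a b = 2 /\ (i < t)%N /\ f = fgen i a b).

Definition switchable (t : nat) (S : {set N}) : Prop :=
  forall (a b : N) (i : 'I_n), a \in S -> b \in S -> dist a b = 2 ->
    (i < t)%N -> sw i a b \in S.

Definition connected_in (S : {set N}) (a b : N) : Prop :=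
  exists p : seq N, all (fun c => c \in S) (a :: p) /\
    path (fun u v => (dist u v <= 1)%N) a p /\ last a p = b.

Definition Itilde (t : nat) (S : {set N}) : polyR -> Prop :=
  ideal_gen (fun f => exists (a b : N) (i : 'I_n),
     (i < t)%N /\ connected_in S a b /\ f = fgen i a b).

Definition VarS (S : {set N}) : polyR -> Prop :=
  ideal_gen (fun f => exists a : N, a \notin S /\ f = xv a).

Definition P_S (t : nat) (S : {set N}) : polyR -> Prop :=
  ideal_add (VarS S) (Itilde t S).
End Defs.

From mathcomp Require Import all_boot all_order all_algebra.
From mathcomp Require Import mpoly.
Set Implicit Arguments. Unset Strict Implicit. Unset Printing Implicit Defensive.
Import GRing.Theory.
Local Open Scope ring_scope.

(* P_S is an ideal, so it suffices to place each generator f_{i,a,b}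
   (d(a,b) = 2, i < t) in it; we may assume a_i <> b_i, else f_{i,a,b} = 0.
   If a, b lie in S, so does s(i,a,b), and a -- s(i,a,b) -- b is a chain of
   steps of distance at most 1: f_{i,a,b} generates Itilde_S.  Otherwise x_a x_b
   lies in Var_S, and so does the other monomial: switching the pair
   s(i,a,b), s(i,b,a) at i gives back a, b, so by switchability one of the two
   is outside S. *)

Section Ideals.
Variables (n : nat) (r : 'I_n -> nat) (K : fieldType).
Local Notation R := (polyR r K).

Record ideal_closed (J : R -> Prop) : Prop := IdealClosed {
  ideal0 : J 0;
  idealD : forall p q, J p -> J q -> J (p + q);
  idealMl : forall c p, J p -> J (c * p) }.

Lemma ideal_gen_closed (G : R -> Prop) : ideal_closed (ideal_gen G).
Proof.
split.
- by exists [::]; rewrite big_nil.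
- move=> _ _ [s1 [G1 ->]] [s2 [G2 ->]]; exists (s1 ++ s2).
  by split; [move=> q; rewrite mem_cat => /orP [/G1|/G2] | rewrite big_cat].
- move=> c _ [s [Gs ->]]; exists [seq (c * q.1, q.2) | q <- s]; split.
    by move=> _ /mapP [q qs ->] /=; apply: Gs.
  by rewrite big_map mulr_sumr; apply: eq_bigr => q _; rewrite mulrA.
Qed.

Lemma ideal_gen_mem (G : R -> Prop) g : G g -> ideal_gen G g.
Proof.
move=> Gg; exists [:: (1, g)]; split; last by rewrite big_seq1 mul1r.
by move=> q; rewrite inE => /eqP ->.
Qed.

Lemma ideal_gen_min (G J : R -> Prop) :
  ideal_closed J -> (forall g, G g -> J g) -> forall p, ideal_gen G p -> J p.
Proof.
move=> [J0 JD JM] GJ _ [s [Gs ->]].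
elim: s Gs => [|q s IHs] Gs; first by rewrite big_nil.
rewrite big_cons; apply: JD; first by apply/JM/GJ/Gs/mem_head.
by apply: IHs => q' q's; apply: Gs; rewrite inE q's orbT.
Qed.

Lemma ideal_add_closed (I J : R -> Prop) :
  ideal_closed I -> ideal_closed J -> ideal_closed (ideal_add I J).
Proof.
move=> [I0 ID IM] [J0 JD JM]; split.
- by exists 0, 0; rewrite addr0.
- move=> _ _ [p1 [p2 [Ip1 [Jp2 ->]]]] [q1 [q2 [Iq1 [Jq2 ->]]]].
  by exists (p1 + q1), (p2 + q2); rewrite addrACA; split; [apply: ID|split; [apply: JD|]].
- move=> c _ [p1 [p2 [Ip1 [Jp2 ->]]]].
  by exists (c * p1), (c * p2); rewrite mulrDr; split; [apply: IM|split; [apply: JM|]].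
Qed.

Lemma ideal_add_subl (I J : R -> Prop) p : ideal_closed J -> I p -> ideal_add I J p.
Proof. by move=> [J0 _ _] Ip; exists p, 0; rewrite addr0. Qed.

Lemma ideal_add_subr (I J : R -> Prop) p : ideal_closed I -> J p -> ideal_add I J p.
Proof. by move=> [I0 _ _] Jp; exists 0, p; rewrite add0r. Qed.

End Ideals.

Section Switches.
Variables (n : nat) (r : 'I_n -> nat).
Local Notation N := (idxN r).
Implicit Types (a b : N) (i : 'I_n).

Lemma distC a b : dist a b = dist b a.
Proof. by apply: eq_card => j; rewrite !inE eq_sym. Qed.

Lemma sw_id i a b : a i = b i -> sw i a b = a.
Proof. by move=> eab; apply/ffunP => j; rewrite ffunE; case: eqP => // ->. Qed.

Lemma swK i a b : sw i (sw i a b) (sw i b a) = a.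
Proof.
apply/ffunP => j; rewrite !ffunE.
by case: eqP => [->|/eqP/negbTE ji]; rewrite ?ffunE ?eqxx ?ji.
Qed.

Lemma dist_sw i a b : dist (sw i a b) (sw i b a) = dist a b.
Proof. by apply: eq_card => j; rewrite !inE !ffunE; case: (j == i); rewrite // eq_sym. Qed.

Lemma dist_sw_l i a b : (dist a (sw i a b) <= 1)%N.
Proof.
rewrite /dist -(cards1 i); apply/subset_leq_card/subsetP => j.
have [->|ji] := eqVneq j i; first by rewrite !inE.
by rewrite !inE ffunE (negbTE ji) eqxx.
Qed.

Lemma dist_sw_r i a b : a i != b i -> dist a b = 2 -> (dist (sw i a b) b <= 1)%N.
Proof.
move=> abi dab2; have : #|[set j | a j != b j] :\ i| = 1%N.
  by move: dab2; rewrite /dist (cardsD1 i) inE abi add1n => -[].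
move=> <-; apply/subset_leq_card/subsetP => j.
have [->|ji] := eqVneq j i; first by rewrite !inE ffunE !eqxx.
by rewrite !inE ffunE (negbTE ji).
Qed.

Variables (t : nat) (S : {set N}).
Hypothesis switchS : switchable t S.

Lemma switchable_sw_pair i a b : dist a b = 2 -> (i < t)%N ->
  sw i a b \in S -> sw i b a \in S -> (a \in S) && (b \in S).
Proof.
move=> dab2 lt_it abS baS; apply/andP; split.
  by rewrite -(swK i a b); apply: switchS; rewrite ?dist_sw.
by rewrite -(swK i b a); apply: switchS; rewrite ?dist_sw // distC.
Qed.

Lemma connected_in_sw i a b : a \in S -> b \in S -> dist a b = 2 -> (i < t)%N ->
  a i != b i -> connected_in S a b.
Proof.
move=> aS bS dab2 lt_it abi; exists [:: sw i a b; b]; split.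
  by rewrite /= aS bS switchS.
by rewrite /= dist_sw_l dist_sw_r.
Qed.

End Switches.

Section Generators.
Variables (n : nat) (r : 'I_n -> nat) (K : fieldType) (t : nat) (S : {set idxN r}).
Hypothesis switchS : switchable t S.

Lemma VarS_closed : ideal_closed (VarS (K := K) S).
Proof. exact: ideal_gen_closed. Qed.

Lemma P_S_closed : ideal_closed (P_S (K := K) t S).
Proof. exact: ideal_add_closed VarS_closed (ideal_gen_closed _). Qed.

Lemma VarS_xvM u v : (u \notin S) || (v \notin S) -> VarS (K := K) S (xv K u * xv K v).
Proof.
have VM := idealMl VarS_closed.
case/orP=> uS; last by apply/VM/ideal_gen_mem; exists v.
by rewrite mulrC; apply/VM/ideal_gen_mem; exists u.
Qed.

Lemma fgen_P_S (a b : idxN r) (i : 'I_n) :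
  dist a b = 2 -> (i < t)%N -> P_S t S (fgen K i a b).
Proof.
move=> dab2 lt_it; have [abi|abi] := eqVneq (a i) (b i).
  by rewrite /fgen (sw_id abi) (sw_id (esym abi)) subrr; exact: ideal0 P_S_closed.
have [/andP [aS bS]|abS] := boolP ((a \in S) && (b \in S)).
  apply/ideal_add_subr/ideal_gen_mem; first exact: VarS_closed.
  by exists a, b, i; split => //; split => //; apply: (connected_in_sw switchS (i := i)).
have swS : ~~ ((sw i a b \in S) && (sw i b a \in S)).
  by apply: contra abS => /andP []; apply: (switchable_sw_pair switchS (i := i)).
apply/ideal_add_subl; first exact: ideal_gen_closed.
rewrite /fgen -mulN1r; apply: (idealD VarS_closed).
  by apply: VarS_xvM; rewrite -negb_and.
by apply/(idealMl VarS_closed)/VarS_xvM; rewrite -negb_and.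
Qed.

End Generators.

Theorem proposition4p2 (K : fieldType) (n : nat) (r : 'I_n -> nat)
  (hr : forall i, (0 < r i)%N) (t : nat) (ht1 : (1 <= t)%N) (htn : (t <= n)%N)
  (S : {set idxN r}) :
  switchable t S ->
  forall p : polyR r K, I_t t p -> P_S t S p.
Proof.
move=> switchS; apply: ideal_gen_min; first exact: P_S_closed.
by move=> _ [a [b [i [dab2 [lt_it ->]]]]]; apply: fgen_P_S.
Qed.
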